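(* Let $X$ be an absolutely continuous real random variable, symmetric and unimodal about $0$, with cdf $F$, and let $\beta\in(0,1]$. Define $U(t)=F(t+\lambda_t^\beta)-F(t)$ and $V(t)=F(t)-F(t-\lambda_t^\beta)$. Then for every $t\in\mathbb{R}$: (a) if $t\ge0$ then $U(t)\le\beta/2\le V(t)$; (b) if $t\le0$ then $V(t)\le\beta/2\le U(t)$.
   Context: $\lambda_t^\beta=\inf\{\lambda>0: F(t+\lambda)-F(t-\lambda)\ge\beta\}$. Symmetric and unimodal about $0$ means $X$ has a density $g$ with $g(-s)=g(s)$ which is nonincreasing on $[0,\infty)$. *)

From HB Require Import structures.
From mathcomp Require Import all_boot all_order all_algebra.
From mathcomp Require Import all_classical all_reals all_analysis.
Set Implicit Arguments. Unset Strict Implicit. Unset Printing Implicit Defensive.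
Import Order.TTheory GRing.Theory Num.Theory.
Local Open Scope classical_set_scope.
Local Open Scope ring_scope.

Definition rcdf d (T : measurableType d) (R : realType) (P : probability T R)
  (X : {RV P >-> R}) (t : R) : R := fine (cdf X t).

Definition has_density d (T : measurableType d) (R : realType)
  (P : probability T R) (X : {RV P >-> R}) (g : R -> R) : Prop :=
  measurable_fun setT g /\ (forall x, 0 <= g x) /\
  forall A : set R, measurable A ->
    distribution P X A = (\int[lebesgue_measure]_(x in A) (g x)%:E)%E.

Definition symmetric_unimodal (R : realType) (g : R -> R) : Prop :=
  (forall s, g (- s) = g s) /\
  (forall s s', 0 <= s -> s <= s' -> g s' <= g s).

(* lambda_t^beta = inf { lambda > 0 : F(t+lambda) - F(t-lambda) >= beta },
   taken in the extended reals (it is +oo when the set is empty, e.g. beta = 1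
   and X has unbounded support). *)
Definition lambda_beta (R : realType) (F : R -> R) (beta t : R) : \bar R :=
  ereal_inf [set (l%:E)%E | l in [set l : R | 0 < l /\ beta <= F (t + l) - F (t - l)]].

Definition ext_cdf (R : realType) (F : R -> R) (x : \bar R) : R :=
  match x with
  | EFin r => F r
  | +oo%E => 1
  | -oo%E => 0
  end.

(* Reflecting the density about t shows, for t >= 0, that the mass of ]t, t+l]
   is at most that of ]t-l, t], since the reflected points lie farther from the
   mode 0; at t = 0 both inequalities give F 0 = 1/2.  The density is bounded
   by g 0, so F is Lipschitz, hence continuous, and a finite lambda_t^beta is
   attained: F(t+lambda) - F(t-lambda) = beta, i.e. U + V = beta with U <= V.
   If lambda_t^beta = +oo, the window F(t+l) - F(t-l), which tends to 1, never
   reaches beta; so beta = 1 and U = 1 - F t <= 1/2 <= F t = V. *)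

From HB Require Import structures.
From mathcomp Require Import all_boot all_order all_algebra.
From mathcomp Require Import all_classical all_reals all_analysis.
From mathcomp Require Import measurable_realfun ring lra.
Import Order.TTheory GRing.Theory Num.Theory.
Import numFieldNormedType.Exports.
Local Open Scope classical_set_scope.
Local Open Scope ring_scope.

Section lambda_beta_properties.
Context {R : realType} {F : R -> R} {beta t : R}.
Local Notation G l := (F (t + l) - F (t - l)).
Local Notation lam := (lambda_beta F beta t).

Lemma lambda_beta_ge0 : (0 <= lam)%E.
Proof. by apply: le_ereal_inf_tmp => _ [l [l0 _] <-]; rewrite lee_fin ltW. Qed.

Lemma lambda_beta_le {l} : 0 < l -> beta <= G l -> (lam <= l%:E)%E.
Proof. by move=> l0 Gl; apply: ereal_inf_lbound; exists l. Qed.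

Lemma lambda_beta_pinfty_cvg_le {c} : lam = +oo%E -> G l @[l --> +oo] --> c -> c <= beta.
Proof.
move=> lamoo Gc; apply: (cvgr_to_le Gc); near=> l.
have l0 : 0 < l by near: l; apply: nbhs_pinfty_gt; rewrite num_real.
rewrite leNgt; apply/negP => /ltW /(lambda_beta_le l0).
by rewrite lamoo leye_eq.
Unshelve. all: by end_near. Qed.

Hypotheses (F_cont : continuous F) (beta_gt0 : 0 < beta).

Let window_continuous : continuous (fun l => G l).
Proof.
move=> l.
have tp : (t + x) @[x --> l] --> t + l by apply: cvgD; [exact: cvg_cst|exact: cvg_id].
have tm : (t - x) @[x --> l] --> t - l by apply: cvgB; [exact: cvg_cst|exact: cvg_id].
by apply: cvgB; [exact: cvg_comp tp (F_cont _)|exact: cvg_comp tm (F_cont _)].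
Qed.

Lemma lambda_beta_attained {ell} : lam = ell%:E -> 0 < ell /\ G ell = beta.
Proof.
move=> lamE.
have ell_min l : 0 < l -> beta <= G l -> ell <= l.
  by move=> l0 /(lambda_beta_le l0); rewrite lamE lee_fin.
have beta_le : beta <= G ell.
  rewrite leNgt; apply/negP => /(cvgr_lt _ (window_continuous ell))/nbhs_ex[d Hd].
  have : (lam < (ell + d%:num)%:E)%E by rewrite lamE lte_fin ltrDl.
  move=> /ereal_inf_lt[_ [l [l0 Gl] <-]]; rewrite lte_fin => ltl.
  have ell_l := ell_min l l0 Gl.
  suff : G l < beta by rewrite ltNge Gl.
  by apply: Hd; rewrite /ball /= ltr_distlC; apply/andP; split; lra.
have ell_gt0 : 0 < ell.
  rewrite lt_def; apply/andP; split; last by rewrite -lee_fin -lamE lambda_beta_ge0.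
  by apply: contraTneq beta_le => ->; rewrite addr0 subr0 subrr -ltNge.
split => //; apply/eqP; rewrite eq_le beta_le andbT leNgt; apply/negP.
move=> /(cvgr_gt _ (window_continuous ell))/nbhs_ex[d Hd].
set m := Num.min d%:num ell.
have [m_gt0 m_le_d m_le_ell] : [/\ 0 < m, m <= d%:num & m <= ell].
  by rewrite lt_min ge_min lexx ge_min lexx orbT ell_gt0 andbT.
have : ell <= ell - m / 2.
  apply: ell_min; first lra.
  by apply/ltW/Hd; rewrite /ball /= opprB addrC subrK gtr0_norm; lra.
lra.
Qed.

End lambda_beta_properties.

Section reflection.
Context {R : realType}.
Local Notation mu := (@lebesgue_measure R).

(* Typed on measurableTypeR R, the domain of lebesgue_measure, so that the
   pushforward of the Lebesgue measure by reflect_at c is a measure. *)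
Definition reflect_at (c : R) : measurableTypeR R -> measurableTypeR R := fun x => c - x.

Lemma measurable_reflect_at c : measurable_fun setT (reflect_at c).
Proof. exact: measurable_funB. Qed.

Lemma lebesgue_measure_reflect (c : R) (A : set R) : measurable A ->
  pushforward mu (reflect_at c) A = mu A.
Proof.
move=> mA; apply/esym/lebesgue_measure_unique => //=; first exact: measurable_reflect_at.
move=> _ _ [[a b]] _ <-; rewrite /pushforward.
have -> : reflect_at c @^-1` `]a, b]%classic = `[c - b, c - a[%classic.
  by apply/seteqP; split => x /=; rewrite /reflect_at !in_itv /= => /andP[? ?];
    apply/andP; split; lra.
rewrite !lebesgue_measure_itv /= !lte_fin.
have -> : (c - b < c - a) = (a < b) by apply/idP/idP; lra.
by case: ltP => // _; rewrite -!EFinD; congr (_%:E); ring.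
Qed.

Lemma ge0_integral_reflect (c : R) (A : set R) (f : R -> \bar R) : measurable A ->
  measurable_fun setT f -> (forall x, (0 <= f x)%E) ->
  (\int[mu]_(x in A) f x = \int[mu]_(x in reflect_at c @^-1` A) f (c - x)%R)%E.
Proof.
move=> mA mf f0.
rewrite (eq_measure_integral (pushforward mu (reflect_at c))); last first.
  by move=> ? B mB _; exact/esym/lebesgue_measure_reflect.
2: exact: measurable_reflect_at.
by move=> mc; rewrite ge0_integral_pushforward //; exact: measurable_funS mf.
Qed.

End reflection.

Section rcdf_limits.
Context {d : measure_display} {T : measurableType d} {R : realType}
  {P : probability T R} {X : {RV P >-> R}}.
Local Notation F := (rcdf X).

Lemma rcdf_cvgy t : F (t + l) @[l --> +oo] --> (1 : R).
Proof.
apply: cvg_comp (cvg_addrl t) _.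
by have /fine_cvgP[] := cvg_cdfy1 X.
Qed.

Lemma rcdf_cvgNy t : F (t - l) @[l --> +oo] --> (0 : R).
Proof.
have Nl : (- l : R) @[l --> +oo] --> -oo by rewrite ninfty.
have tl : (t - l) @[l --> +oo] --> -oo := cvg_comp _ _ Nl (cvg_addrl_Ny t).
apply: cvg_comp tl _.
by have /fine_cvgP[] := cvg_cdfNy0 X.
Qed.

Lemma rcdf_window_cvg t : F (t + l) - F (t - l) @[l --> +oo] --> (1 : R).
Proof. by rewrite -[1]subr0; apply: cvgB; [exact: rcdf_cvgy|exact: rcdf_cvgNy]. Qed.

End rcdf_limits.

Section symmetric_unimodal_density.
Context {d : measure_display} {T : measurableType d} {R : realType}
  {P : probability T R} {X : {RV P >-> R}} {g : R -> R}.
Hypotheses (X_density : has_density X g) (g_symu : symmetric_unimodal g).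
Local Notation F := (rcdf X).
Local Notation mu := (@lebesgue_measure R).

Let g_measurable : measurable_fun setT (fun x => (g x)%:E).
Proof. by apply/measurable_EFinP; case: X_density. Qed.

Let g_ge0 x : 0 <= g x.
Proof. by case: X_density => _ []. Qed.

Lemma density_le_norm x y : `|x| <= `|y| -> g y <= g x.
Proof.
case: g_symu => g_sym g_mono.
have g_norm z : g `|z| = g z by case: (ger0P z) => // _; rewrite g_sym.
by move=> xy; rewrite -g_norm -(g_norm x); apply: g_mono.
Qed.

Lemma rcdfB {a b} : a <= b -> ((F b - F a)%:E = \int[mu]_(x in `]a, b]) (g x)%:E)%E.
Proof.
move=> ab; case: X_density => _ [_ <-] //.
rewrite /rcdf /cdf (@itv_bndbnd_setU _ _ _ (BRight a)) //.
rewrite measureU //=; last first.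
  by apply/seteqP; split => x //= []; rewrite !in_itv /= => xa /andP[ax _]; lra.
by rewrite fineD ?fin_num_measure // addrAC subrr add0r fineK ?fin_num_measure.
Qed.

Lemma rcdf_le {a b} : a <= b -> F a <= F b.
Proof.
by move=> ab; rewrite -subr_ge0 -lee_fin rcdfB //; apply: integral_ge0 => x _; rewrite lee_fin.
Qed.

Lemma rcdf_lipschitz x y : `|F x - F y| <= g 0 * `|x - y|.
Proof.
wlog xy : x y / x <= y => [hw|].
  by case: (leP x y) => [/hw //|/ltW/hw]; rewrite distrC (distrC x).
rewrite distrC (distrC x) !ger0_norm ?subr_ge0 ?rcdf_le // -lee_fin rcdfB //.
apply: (@le_trans _ _ (\int[mu]_(z in `]x, y]) (g 0)%:E)%E).
  apply: ge0_le_integral => //.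
  - by move=> z _; rewrite lee_fin.
  - exact: measurable_funS g_measurable.
  - by move=> z _; rewrite lee_fin density_le_norm // normr0.
rewrite integral_cst //= lebesgue_measure_itv /= lte_fin.
case: ltP => [_|yx]; first by rewrite -EFinD -EFinM.
have -> : y = x by apply/eqP; rewrite eq_le xy yx.
by rewrite mule0 subrr mulr0.
Qed.

Lemma rcdf_continuous : continuous F.
Proof.
move=> x; apply/cvgrPdist_le => e e0.
have g0_ge0 := g_ge0 0.
have d_gt0 : 0 < e / (g 0 + 1) by apply: divr_gt0; lra.
near=> y; apply: le_trans (rcdf_lipschitz x y) _.
have : `|x - y| <= e / (g 0 + 1) by near: y; exact: (cvgr_dist_le id x cvg_id _ d_gt0).
rewrite ler_pdivlMr; last lra.
by have := normr_ge0 (x - y); nra.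
Unshelve. all: by end_near. Qed.

Lemma rcdf_reflect_le a b c : a <= b ->
  (forall x, c - b < x < c - a -> `|x| <= `|c - x|) ->
  F b - F a <= F (c - a) - F (c - b).
Proof.
move=> ab nearer0.
have mgc : measurable_fun setT (fun x : R => (g (c - x))%:E).
  exact: measurableT_comp g_measurable (measurable_reflect_at c).
rewrite -lee_fin rcdfB // rcdfB; last lra.
rewrite (ge0_integral_reflect c) //.
have -> : reflect_at c @^-1` `]a, b] = `[c - b, c - a[%classic.
  by apply/seteqP; split => x /=; rewrite /reflect_at !in_itv /= => /andP[? ?];
    apply/andP; split; lra.
rewrite (integral_itv_bndoo true true); last exact: measurable_funS mgc.
rewrite (integral_itv_bndoo false false); last exact: measurable_funS g_measurable.
apply: ge0_le_integral => //.
- by move=> x _; rewrite lee_fin.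
- exact: measurable_funS mgc.
- exact: measurable_funS g_measurable.
- by move=> x; rewrite /= in_itv /= => /nearer0; rewrite lee_fin; exact: density_le_norm.
Qed.

Lemma rcdf_right_le_left {t l} : 0 <= t -> 0 <= l -> F (t + l) - F t <= F t - F (t - l).
Proof.
move=> t0 l0; have := @rcdf_reflect_le t (t + l) (t + t).
have -> : t + t - t = t by ring.
have -> : t + t - (t + l) = t - l by ring.
apply; first lra.
move=> x /andP[lx xt].
rewrite (@ger0_norm _ (t + t - x)); last lra.
by rewrite ler_norml; apply/andP; split; lra.
Qed.

Lemma rcdf_left_le_right {t l} : t <= 0 -> 0 <= l -> F t - F (t - l) <= F (t + l) - F t.
Proof.
move=> t0 l0; have := @rcdf_reflect_le (t - l) t (t + t).
have -> : t + t - (t - l) = t + l by ring.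
have -> : t + t - t = t by ring.
apply; first lra.
move=> x /andP[tx xtl].
rewrite (@ler0_norm _ (t + t - x)); last lra.
by rewrite ler_norml; apply/andP; split; lra.
Qed.

Lemma rcdf0 : F 0 = 2^-1.
Proof.
have sum_cvg1 : F (0 + l) + F (0 - l) @[l --> +oo] --> (1 : R).
  by rewrite -[1]addr0; apply: cvgD; [exact: rcdf_cvgy|exact: rcdf_cvgNy].
have sum_eq : \forall l \near +oo, 2 * F 0 = F (0 + l) + F (0 - l).
  near=> l; have l0 : 0 <= l by near: l; apply: nbhs_pinfty_ge; rewrite num_real.
  by have := rcdf_right_le_left (lexx 0) l0; have := rcdf_left_le_right (lexx 0) l0; lra.
have sum_cvgF0 : F (0 + l) + F (0 - l) @[l --> +oo] --> 2 * F 0.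
  exact: cvg_trans (near_eq_cvg sum_eq) (cvg_cst _).
have : (1 : R) = 2 * F 0 by apply: (cvg_unique _ sum_cvg1 sum_cvgF0); exact: Rhausdorff.
lra.
Unshelve. all: by end_near. Qed.

End symmetric_unimodal_density.

Theorem mainTheorem10 (d : measure_display) (T : measurableType d)
  (R : realType) (P : probability T R) (X : {RV P >-> R}) (g : R -> R)
  (beta : R) :
  has_density X g -> symmetric_unimodal g ->
  0 < beta <= 1 ->
  let F := rcdf X in
  let U := fun t => ext_cdf F (t%:E + lambda_beta F beta t)%E - F t in
  let V := fun t => F t - ext_cdf F (t%:E - lambda_beta F beta t)%E in
  forall t : R,
    (0 <= t -> U t <= beta / 2 <= V t) /\
    (t <= 0 -> V t <= beta / 2 <= U t).
Proof.
move=> dens symu /andP[beta_gt0 beta_le1] F U V t; rewrite /U /V /F.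
have F0 := rcdf0 dens symu.
case lamE : (lambda_beta (rcdf X) beta t) => [ell| |] /=.
- have [ell_gt0 window] := lambda_beta_attained (rcdf_continuous dens symu) beta_gt0 lamE.
  split => t0; apply/andP.
  + have := rcdf_right_le_left dens symu t0 (ltW ell_gt0); lra.
  + have := rcdf_left_le_right dens symu t0 (ltW ell_gt0); lra.
- have beta1 : beta = 1.
    apply/eqP; rewrite eq_le beta_le1.
    exact: lambda_beta_pinfty_cvg_le lamE (rcdf_window_cvg t).
  by split => t0; have := rcdf_le dens t0; lra.
- by have := @lambda_beta_ge0 R (rcdf X) beta t; rewrite lamE.
Qed.
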